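(* Let $\ell\ge2$, $r_0,\dots,r_\ell\ge1$ integers, $d_0,\dots,d_\ell$ integers with $d_V=\sum_kd_k=0$ and $d_0+d_1\le0$, and let $c$ be a real number with $c>\max_k d_k/r_k$. Then $\Delta_{\Sigma_2}>0$, where $$\Delta_{\Sigma_2}=\sum_{k=2}^\ell\frac{d_k\big(2r_k(1+r_V)c-(r_V+2)d_k\big)}{(r_V+1)r_Vc\,[r_k(r_V+2)c-2d_k]}+\frac{r_V(r_V+2)(r_V+1)c^2-2(r_V+1)(r_V-r_0-r_1)\mu_{01}c-(r_V+2)(d_1+d_0)\mu_{01}}{r_V(r_V+1)c\,[(r_V+2)c-2\mu_{01}]}.$$
   Context: $r_V=\sum_{k=0}^\ell r_k$ and $\mu_{01}=\frac{d_0+d_1}{r_0+r_1}$. *)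

From mathcomp Require Import all_boot all_order all_algebra.
From mathcomp Require Import reals.
Set Implicit Arguments. Unset Strict Implicit. Unset Printing Implicit Defensive.
Import Order.TTheory GRing.Theory Num.Theory.
Local Open Scope ring_scope.

Definition rV (R : realType) (l : nat) (r : nat -> nat) : R :=
  (\sum_(0 <= k < l.+1) r k)%:R.

Definition mu01 (R : realType) (r : nat -> nat) (d : nat -> int) : R :=
  ((d 0%N)%:~R + (d 1%N)%:~R) / ((r 0%N)%:R + (r 1%N)%:R).

Definition DeltaSigma2 (R : realType) (l : nat) (r : nat -> nat)
    (d : nat -> int) (c : R) : R :=
  let rv := rV R l r in
  let mu := mu01 R r d in
  let rk k : R := (r k)%:R in
  let dk k : R := (d k)%:~R in
  \sum_(2 <= k < l.+1)
     (dk k * (2 * rk k * (1 + rv) * c - (rv + 2) * dk k)) /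
     ((rv + 1) * rv * c * (rk k * (rv + 2) * c - 2 * dk k))
  + (rv * (rv + 2) * (rv + 1) * c ^+ 2
     - 2 * (rv + 1) * (rv - rk 0%N - rk 1%N) * mu * c
     - (rv + 2) * (dk 1%N + dk 0%N) * mu) /
    (rv * (rv + 1) * c * ((rv + 2) * c - 2 * mu)).

From mathcomp Require Import all_boot all_order all_algebra.
From mathcomp Require Import reals.
From mathcomp Require Import ring lra.
Set Implicit Arguments. Unset Strict Implicit. Unset Printing Implicit Defensive.
Import Order.TTheory GRing.Theory Num.Theory.
Local Open Scope ring_scope.

(** Write V for r_V.  Apart from the constant 1 hidden in the last fraction,
    Delta is a sum of terms f(r, x) over the blocks (r_k, d_k), k >= 2, and the
    merged block (r_0 + r_1, d_0 + d_1).  Whenever x < r c, f(r, x) exceeds the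
    affine function (V+2) x / (2 (V+1) V c) - r / V; summed over all blocks
    these affine bounds add up to (V+2) d_V / (2 (V+1) V c) - r_V / V = -1,
    hence Delta > 1 - 1 = 0. *)

Lemma sum_nat_first2 (M : nmodType) (n : nat) (F : nat -> M) : (1 < n)%N ->
  \sum_(0 <= k < n) F k = F 0%N + F 1%N + \sum_(2 <= k < n) F k.
Proof. by move=> n_gt1; rewrite big_ltn ?(ltn_trans _ n_gt1) // big_ltn // addrA. Qed.

Section BlockTerms.

Variables (R : realFieldType) (V c : R).
Hypotheses (V_gt0 : 0 < V) (c_gt0 : 0 < c).

Let V1_gt0 : 0 < V + 1. Proof. by rewrite addr_gt0. Qed.
Let V2_gt0 : 0 < V + 2. Proof. by rewrite addr_gt0. Qed.

Definition block_term (r x : R) : R :=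
  x * (2 * r * (1 + V) * c - (V + 2) * x) /
  ((V + 1) * V * c * (r * (V + 2) * c - 2 * x)).

Definition block_bound (r x : R) : R :=
  (V + 2) * x / (2 * ((V + 1) * V * c)) - r / V.

Lemma block_bound_lt_term (r x : R) :
  0 < r -> x < r * c -> block_bound r x < block_term r x.
Proof.
move=> r_gt0 x_lt.
have rVc_gt0 : 0 < r * V * c by rewrite !mulr_gt0.
have den_gt0 : 0 < r * (V + 2) * c - 2 * x by nra.
have num_gt0 : 0 < 2 * r * (V + 1) * c - (V + 2) * x.
  have -> : 2 * r * (V + 1) * c - (V + 2) * x = (V + 2) * (r * c - x) + r * V * c
    by ring.
  by rewrite addr_gt0 // mulr_gt0 ?subr_gt0.
have gapE : block_term r x - block_bound r x =
    (V + 2) * r * c * (2 * r * (V + 1) * c - (V + 2) * x) /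
    (2 * ((V + 1) * V * c) * (r * (V + 2) * c - 2 * x)).
  by rewrite /block_term /block_bound; field; rewrite !lt0r_neq0.
rewrite -subr_gt0 gapE divr_gt0 // !mulr_gt0 //.
Qed.

Lemma block_boundD (r1 r2 x1 x2 : R) :
  block_bound (r1 + r2) (x1 + x2) = block_bound r1 x1 + block_bound r2 x2.
Proof. by rewrite /block_bound; ring. Qed.

Lemma sum_block_bound (I : Type) (s : seq I) (r x : I -> R) :
  \sum_(i <- s) block_bound (r i) (x i) =
  block_bound (\sum_(i <- s) r i) (\sum_(i <- s) x i).
Proof. by rewrite /block_bound sumrB -!mulr_suml -mulr_sumr. Qed.

Lemma block_bound_total : block_bound V 0 = -1.
Proof. by rewrite /block_bound mulr0 mul0r sub0r divff ?lt0r_neq0. Qed.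

Lemma merged_block_termE (r0 r1 x0 x1 : R) :
  0 < r0 + r1 -> x0 + x1 < (r0 + r1) * c ->
  (V * (V + 2) * (V + 1) * c ^+ 2
     - 2 * (V + 1) * (V - r0 - r1) * ((x0 + x1) / (r0 + r1)) * c
     - (V + 2) * (x1 + x0) * ((x0 + x1) / (r0 + r1))) /
  (V * (V + 1) * c * ((V + 2) * c - 2 * ((x0 + x1) / (r0 + r1))))
  = 1 + block_term (r0 + r1) (x0 + x1).
Proof.
move=> r_gt0 x_lt; set mu := (x0 + x1) / (r0 + r1).
have mu_lt : mu < c by rewrite ltr_pdivrMr // mulrC.
have rVc_gt0 : 0 < (r0 + r1) * V * c by rewrite !mulr_gt0.
have den_gt0 : 0 < (r0 + r1) * (V + 2) * c - 2 * (x0 + x1) by nra.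
have mu_den_gt0 : 0 < (V + 2) * c - 2 * mu by nra.
by rewrite /mu /block_term; field; rewrite !lt0r_neq0 //; lra.
Qed.

Lemma sum_block_term_gt (I : eqType) (s : seq I) (r x : I -> R) (r0 x0 : R) :
  0 < r0 -> x0 < r0 * c ->
  (forall i, i \in s -> 0 < r i) -> (forall i, i \in s -> x i < r i * c) ->
  r0 + \sum_(i <- s) r i = V -> x0 + \sum_(i <- s) x i = 0 ->
  -1 < block_term r0 x0 + \sum_(i <- s) block_term (r i) (x i).
Proof.
move=> r0_gt0 x0_lt r_gt0 x_lt sum_r sum_x.
have -> : -1 = block_bound r0 x0 + \sum_(i <- s) block_bound (r i) (x i).
  by rewrite sum_block_bound -block_boundD sum_r sum_x block_bound_total.
rewrite ltr_leD ?block_bound_lt_term // big_seq [leRHS]big_seq.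
by apply: ler_sum => i s_i; rewrite ltW ?block_bound_lt_term ?r_gt0 ?x_lt.
Qed.

End BlockTerms.

Lemma DeltaSigma2E (R : realType) (l : nat) (r : nat -> nat) (d : nat -> int)
    (c : R) :
  let V := rV R l r in let r01 : R := (r 0%N)%:R + (r 1%N)%:R in
  0 < V -> 0 < c -> 0 < r01 -> (d 0%N)%:~R + (d 1%N)%:~R < r01 * c ->
  DeltaSigma2 l r d c = 1 + (block_term V c r01 ((d 0%N)%:~R + (d 1%N)%:~R)
    + \sum_(2 <= k < l.+1) block_term V c (r k)%:R (d k)%:~R).
Proof.
move=> V r01 V_gt0 c_gt0 *; rewrite /DeltaSigma2 /= merged_block_termE //.
by rewrite addrCA; congr (_ + _); rewrite addrC.
Qed.

Theorem lemma3p21 (R : realType) (l : nat) (r : nat -> nat) (d : nat -> int)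
    (c : R) :
  (2 <= l)%N ->
  (forall k, (k <= l)%N -> (1 <= r k)%N) ->
  (\sum_(0 <= k < l.+1) d k = 0)%R ->
  (d 0%N + d 1%N <= 0)%R ->
  (forall k, (k <= l)%N -> (d k)%:~R / (r k)%:R < c) ->
  0 < DeltaSigma2 l r d c.
Proof.
move=> l_ge2 r_ge1 sum_d _ d_lt_c.
set V := rV R l r.
have r_gt0 k : (k <= l)%N -> 0 < (r k)%:R :> R by move/r_ge1; rewrite ltr0n.
have d_lt k : (k <= l)%N -> (d k)%:~R < (r k)%:R * c :> R.
  by move=> kl; rewrite mulrC -ltr_pdivrMr ?r_gt0 ?d_lt_c.
have sum_r : \sum_(0 <= k < l.+1) ((r k)%:R : R) = V by rewrite /V /rV natr_sum.
have sum_dR : \sum_(0 <= k < l.+1) ((d k)%:~R : R) = 0.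
  by rewrite -(rmorph_sum intr) sum_d.
have V_gt0 : 0 < V by rewrite /V /rV ltr0n big_ltn // addn_gt0 r_ge1.
have c_gt0 : 0 < c.
  have : \sum_(0 <= k < l.+1) ((d k)%:~R : R) < \sum_(0 <= k < l.+1) (r k)%:R * c.
    by apply: ltr_sum_nat => // k /andP[_ kl]; apply: d_lt.
  by rewrite sum_dR -mulr_suml sum_r pmulr_rgt0.
have l_gt1 : (1 < l.+1)%N by rewrite ltnS ltnW.
rewrite (sum_nat_first2 _ l_gt1) in sum_r; rewrite (sum_nat_first2 _ l_gt1) in sum_dR.
have r01_gt0 : 0 < (r 0%N)%:R + (r 1%N)%:R :> R by rewrite addr_gt0 ?r_gt0 // ltnW.
have d01_lt : (d 0%N)%:~R + (d 1%N)%:~R < ((r 0%N)%:R + (r 1%N)%:R) * c :> R.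
  by rewrite mulrDl ltrD ?d_lt // ltnW.
rewrite DeltaSigma2E // -ltrBlDl sub0r.
apply: sum_block_term_gt => // k; rewrite mem_index_iota => /andP[_ kl].
- exact: r_gt0.
- exact: d_lt.
Qed.
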